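(* Let $v\in\mathbb V^N$ be a component additive network game and $\rho\in\mathbb P^N$. Then $\mathbb E(v,\rho)=\sum_{h\in C(g(\rho))}\ \sum_{h'\subseteq h}\rho_h(h')\cdot v(h')$.
   Context: $N=\{1,\dots,n\}$ is a finite player set. A link is an unordered pair $ij=\{i,j\}$ of distinct players; $g_N$ is the set of all links; a network is any $g\subseteq g_N$; $\mathbb G^N$ is the set of all networks. For a network $g$, $N(g)$ is the set of players with at least one link in $g$. A component of $g$ is a nonempty subnetwork $h\subseteq g$ that is connected (any two players of $N(h)$ are joined by a path in $h$) and maximal (if $i\in N(h)$ and $ij\in g$ then $ij\in h$); $C(g)$ is the set of components of $g$ (empty for the empty network). A network formation probability distribution is $\rho\colon\mathbb G^N\to[0,1]$ with $\sum_g\rho(g)=1$; $\mathbb P^N$ is the set of these. $\mathbb G(\rho)=\{g:\rho(g)>0\}$, and the extent is $g(\rho)=\bigcup_{g\in\mathbb G(\rho)}g$. For a network $g$, the restriction $\rho_g$ is $\rho_g(h)=\sum_{h'\subseteq g_N\setminus g}\rho(h\cup h')$ if $h\subseteq g$ and $\rho_g(h)=0$ otherwise. A network game is $v\colon\mathbb G^N\to\mathbb R$ with $v(\varnothing)=0$; $\mathbb V^N$ is the set of these; $v$ is component additive if $v(g)=\sum_{h\in C(g)}v(h)$ for all $g$. The expected wealth is $\mathbb E(v,\rho)=\sum_{g\in\mathbb G^N}\rho(g)\,v(g)$. *)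

From mathcomp Require Import all_boot all_order all_algebra.
Set Implicit Arguments. Unset Strict Implicit. Unset Printing Implicit Defensive.
Import Order.TTheory GRing.Theory Num.Theory.
Local Open Scope ring_scope.

(* Players N = {0,...,n-1} (standing for {1,...,n}). *)
Definition link (n : nat) := {s : {set 'I_n} | #|s| == 2%N}.
Definition network (n : nat) := {set link n}.

Definition adj n (h : network n) : rel 'I_n :=
  fun i j => [exists l in h, val l == [set i; j]].

Definition players n (h : network n) : {set 'I_n} :=
  [set i | [exists l in h, i \in val l]].

Definition connectedb n (h : network n) : bool :=
  [forall i in players h, forall j in players h, connect (adj h) i j].

Definition maximalb n (g h : network n) : bool :=
  [forall i in players h, forall l in g, (i \in val l) ==> (l \in h)].

Definition components n (g : network n) : {set network n} :=
  [set h : network n | [&& h != set0, h \subset g, connectedb h & maximalb g h]].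

Definition is_distribution (R : numDomainType) n (rho : network n -> R) : Prop :=
  (forall g, 0 <= rho g <= 1) /\ \sum_(g : network n) rho g = 1.

Definition extent (R : numDomainType) n (rho : network n -> R) : network n :=
  \bigcup_(g : network n | 0 < rho g) g.

Definition restr (R : numDomainType) n (rho : network n -> R) (g : network n)
  (h : network n) : R :=
  if h \subset g then \sum_(h' : network n | h' \subset ~: g) rho (h :|: h') else 0.

Definition is_game (R : numDomainType) n (v : network n -> R) : Prop := v set0 = 0.

Definition component_additive (R : numDomainType) n (v : network n -> R) : Prop :=
  forall g : network n, v g = \sum_(h in components g) v h.

Definition expected_wealth (R : numDomainType) n (v rho : network n -> R) : R :=
  \sum_(g : network n) rho g * v g.

From mathcomp Require Import all_boot all_order all_algebra.
Import GRing.Theory Num.Theory.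

(* For g a subnetwork of G, every component of g lies in exactly one component
   H of G, and the components of g lying in H are the components of g :&: H.
   Component additivity thus gives v g = \sum_(H in C(G)) v (g :&: H); with
   G = g(rho) this holds for every g in the support of rho.  Exchanging sums and
   grouping the networks g by h' = g :&: H, the mass of the networks with a given
   trace h' on H is exactly rho_H(h'), via the bijection g <-> g :\: H. *)

Set Implicit Arguments. Unset Strict Implicit.

Section Components.
Variable n : nat.
Implicit Types (g h G H : network n) (l : link n) (i j x y : 'I_n).

Lemma link_other_end l x : x \in val l -> exists y, val l = [set x; y].
Proof.
have /cards2P [a [b [_ ->]]] := valP l.
rewrite !inE => /orP[/eqP->|/eqP->]; first by exists b.
by exists a; rewrite setUC.
Qed.

Lemma link_end l : exists x, x \in val l.
Proof. by have /cards2P [a [b [_ ->]]] := valP l; exists a; rewrite !inE eqxx. Qed.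

Lemma adjP h x y : reflect (exists2 l, l \in h & val l = [set x; y]) (adj h x y).
Proof.
apply: (iffP existsP) => [[l /andP[lh /eqP E]]|[l lh E]]; first by exists l.
by exists l; rewrite lh E eqxx.
Qed.

Lemma adj_sym h : symmetric (adj h).
Proof.
by move=> x y; apply/adjP/adjP => -[l lh E]; exists l; rewrite // E setUC.
Qed.

Lemma playersP h i : reflect (exists2 l, l \in h & i \in val l) (i \in players h).
Proof.
rewrite inE; apply: (iffP existsP) => [[l /andP[lh il]]|[l lh il]]; exists l => //.
by rewrite lh il.
Qed.

Lemma connect_adj_sub h1 h2 x y :
  h1 \subset h2 -> connect (adj h1) x y -> connect (adj h2) x y.
Proof.
move=> /subsetP h12; apply: connect_sub => a b /adjP[l /h12 lh2 E].
by apply: connect1; apply/adjP; exists l.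
Qed.

Lemma connectedbP h :
  reflect {in players h &, forall i j, connect (adj h) i j} (connectedb h).
Proof.
apply: (iffP forallP) => [C i j hi hj|C i].
  by have /implyP/(_ hi)/forallP/(_ j)/implyP := C i; apply.
by apply/implyP => hi; apply/forallP => j; apply/implyP; apply: C.
Qed.

Lemma connectedb_from h x :
  (forall y, y \in players h -> connect (adj h) x y) -> connectedb h.
Proof.
move=> Cx; apply/connectedbP => i j hi hj; apply: (connect_trans (y := x)).
  by rewrite (sym_connect_sym (@adj_sym h)); apply: Cx.
exact: Cx.
Qed.

Lemma maximalbP G H :
  reflect {in players H, forall i l, l \in G -> i \in val l -> l \in H}
          (maximalb G H).
Proof.
apply: (iffP forallP) => [M i Hi l lG il|M i].
  by have /implyP/(_ Hi)/forallP/(_ l)/implyP/(_ lG)/implyP := M i; apply.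
apply/implyP => Hi; apply/forallP => l; apply/implyP => lG; apply/implyP.
exact: M.
Qed.

(* Paths of H1 starting in players H2 never leave H2, by maximality. *)
Lemma connected_sub_maximal G H1 H2 x :
  H1 \subset G -> connectedb H1 -> maximalb G H2 ->
  x \in players H1 -> x \in players H2 -> H1 \subset H2.
Proof.
move=> /subsetP H1G /connectedbP C1 /maximalbP M2 x1 x2.
have reach y : connect (adj H1) x y -> y \in players H2.
  case/connectP => p + ->; elim: p x x2 {x1} => //= z p IH a a2 /andP[].
  case/adjP => l /H1G lG E; apply: IH; apply/playersP; exists l.
    by apply: (M2 a) => //; rewrite E !inE eqxx.
  by rewrite E !inE eqxx orbT.
apply/subsetP => l lH1; have [y yl] := link_end l.
have y1 : y \in players H1 by apply/playersP; exists l.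
exact: (M2 y (reach _ (C1 _ _ x1 y1)) _ (H1G _ lH1)).
Qed.

Lemma componentsP G H :
  reflect [/\ H != set0, H \subset G, connectedb H & maximalb G H]
          (H \in components G).
Proof. by rewrite inE; apply: and4P. Qed.

Lemma connectedb_link l : connectedb [set l].
Proof.
have [x xl] := link_end l; have [y E] := link_other_end xl.
apply: (connectedb_from (x := x)) => a /playersP[l' /set1P ->].
rewrite E !inE => /orP[/eqP->|/eqP->]; first exact: connect0.
by apply: connect1; apply/adjP; exists l; rewrite ?set11.
Qed.

Lemma connectedbU1 H l i :
  connectedb H -> i \in players H -> i \in val l -> connectedb (l |: H).
Proof.
move=> /connectedbP CH Hi il; have [z E] := link_other_end il.
apply: (connectedb_from (x := i)) => a /playersP[l' /setU1P[->|l'H] al'].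
  move: al'; rewrite E !inE => /orP[/eqP->|/eqP->]; first exact: connect0.
  by apply: connect1; apply/adjP; exists l; rewrite ?setU11.
apply: (connect_adj_sub (subsetUr _ _)); apply: CH => //.
by apply/playersP; exists l'.
Qed.

(* A connected subnetwork of G containing l with the most links is maximal:
   adding a link at one of its players would keep it connected. *)
Lemma component_exists G l : l \in G -> exists2 H, H \in components G & l \in H.
Proof.
move=> lG; pose P H := [&& H \subset G, connectedb H & l \in H].
have P1 : P [set l] by rewrite /P sub1set lG connectedb_link set11.
case: (arg_maxnP (fun H => #|H|) P1) => H /and3P[HG CH lH] Hmax.
exists H => //; apply/componentsP; split=> //; first by apply/set0Pn; exists l.
apply/maximalbP => i Hi l' l'G il'; apply: contraT => l'H.
have CH' := connectedbU1 CH Hi il'.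
have /Hmax : P (l' |: H) by rewrite /P subUset sub1set l'G HG CH' !inE lH orbT.
by rewrite cardsU1 l'H /= ltnn.
Qed.

Lemma component_eq G H1 H2 h :
  H1 \in components G -> H2 \in components G ->
  h != set0 -> h \subset H1 -> h \subset H2 -> H1 = H2.
Proof.
move=> /componentsP[_ G1 C1 M1] /componentsP[_ G2 C2 M2] /set0Pn[l lh] h1 h2.
have [x xl] := link_end l.
have x1 : x \in players H1 by apply/playersP; exists l => //; apply: (subsetP h1).
have x2 : x \in players H2 by apply/playersP; exists l => //; apply: (subsetP h2).
by apply/eqP; rewrite eqEsubset (connected_sub_maximal G1 C1 M2 x1 x2)
  (connected_sub_maximal G2 C2 M1 x2 x1).
Qed.

Lemma component_sub_component G g h :
  g \subset G -> h \in components g -> exists2 H, H \in components G & h \subset H.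
Proof.
move=> gG /componentsP[/set0Pn[l lh] hg Ch _].
have hG := subset_trans hg gG.
have [H HC lH] := component_exists (subsetP hG _ lh).
have /componentsP[_ _ _ MH] := HC; have [x xl] := link_end l.
exists H => //; apply: (connected_sub_maximal hG Ch MH (x := x)).
all: by apply/playersP; exists l.
Qed.

Lemma components_setI G g H : g \subset G -> H \in components G ->
  components (g :&: H) = [set h in components g | h \subset H].
Proof.
move=> /subsetP gG /componentsP[_ _ _ /maximalbP MH].
apply/setP => h; rewrite !inE subsetI.
apply/idP/idP => [/and4P[-> /andP[-> hH] -> /maximalbP Mh]|].
  rewrite hH andbT; apply/maximalbP => i hi l lg il.
  apply: (Mh i hi) => //; rewrite inE lg (MH i) ?gG //.
  case/playersP: hi => l' l'h il'; apply/playersP; exists l' => //.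
  exact: (subsetP hH).
case/andP=> /and4P[-> -> -> /maximalbP Mh] ->; rewrite andbT.
by apply/maximalbP => i hi l /setIP[lg _]; apply: Mh.
Qed.

End Components.

Local Open Scope ring_scope.

Section Wealth.
Variables (R : numDomainType) (n : nat).
Implicit Types (v rho : network n -> R) (g h G H : network n).

Lemma component_additive_setI v G g : component_additive v -> g \subset G ->
  v g = \sum_(H in components G) v (g :&: H).
Proof.
move=> vCA gG.
under eq_bigr => H HC do rewrite vCA (components_setI gG HC).
rewrite vCA (exchange_big_dep (mem (components g))) /=; last first.
  by move=> H h _; rewrite inE => /andP[].
apply: eq_bigr => h hC.
have [H0 H0C hH0] := component_sub_component gG hC.
have /componentsP[h0 _ _ _] := hC.
rewrite (big_pred1 H0) // => H; rewrite [h \in _]inE hC /=.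
apply/idP/eqP => [/andP[HC hH]|->]; last by rewrite H0C.
exact: (component_eq HC H0C h0 hH hH0).
Qed.

Lemma sub_extent rho g : 0 < rho g -> g \subset extent rho.
Proof. exact: bigcup_sup. Qed.

Lemma restrE rho H h : h \subset H ->
  restr rho H h = \sum_(g | g :&: H == h) rho g.
Proof.
move=> hH; rewrite /restr hH.
rewrite [RHS](reindex_onto (fun j => h :|: j) (fun g => g :\: H)); last first.
  by move=> g /eqP <-; apply: setID.
apply: eq_bigl => j; apply/idP/andP => [jH|[_ /eqP <-]]; last first.
  by rewrite setDE subsetIr.
have jH0 : j :&: H = set0 by apply/eqP; rewrite setI_eq0 disjoints_subset.
have hH0 : h :\: H = set0 by apply/eqP; rewrite setD_eq0.
by rewrite setIUl (setIidPl hH) jH0 setU0 setDUl hH0 set0U setDE (setIidPl jH).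
Qed.

End Wealth.

Theorem proposition2 (R : realFieldType) (n : nat) (v rho : network n -> R) :
  is_game v -> component_additive v -> is_distribution rho ->
  expected_wealth v rho =
  \sum_(h in components (extent rho))
     \sum_(h' : network n | h' \subset h) restr rho h h' * v h'.
Proof.
move=> _ vCA [rho01 _].
have split_g g : rho g * v g =
    \sum_(H in components (extent rho)) rho g * v (g :&: H).
  have [->|rho_g_neq0] := eqVneq (rho g) 0.
    by rewrite mul0r big1 // => H _; rewrite mul0r.
  have /andP[rho_g_ge0 _] := rho01 g.
  have /sub_extent gG : 0 < rho g by rewrite lt0r rho_g_neq0.
  by rewrite (component_additive_setI vCA gG) mulr_sumr.
rewrite /expected_wealth (eq_bigr _ (fun g _ => split_g g)) exchange_big /=.
apply: eq_bigr => H _.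
rewrite (partition_big (fun g => g :&: H) (fun h' => h' \subset H)) /=; last first.
  by move=> g _; apply: subsetIr.
apply: eq_bigr => h' h'H.
by rewrite (restrE _ h'H) mulr_suml; apply: eq_big => [g|g /eqP->].
Qed.
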